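(* $$\sum_{n=1}^\infty \frac{H_n \binom{2n}{n}}{(2n-1)^2\, 2^{2n}} = \pi(1-\log 2) - 4(1-G),$$ where $G$ is Catalan's constant.
   Context: $H_n=\sum_{k=1}^n \frac{1}{k}$ denotes the $n$-th harmonic number and $\binom{2n}{n}$ the central binomial coefficient; $G=\sum_{n=0}^\infty \frac{(-1)^n}{(2n+1)^2}$ is Catalan's constant; $\log$ is the natural logarithm. *)

From Stdlib Require Import Reals.
From Coquelicot Require Import Coquelicot.
Open Scope R_scope.

Definition harmonic (n : nat) : R :=
  sum_n_m (fun k : nat => / INR k) 1 n.

Definition central_binom (n : nat) : R := Binomial.C (2 * n) n.

Definition catalan_term (n : nat) : R := (-1) ^ n / (INR (2 * n + 1)) ^ 2.
Definition Catalan : R := Series catalan_term.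

(* summand of the main series, indexed from n = 1 *)
Definition main_term (n : nat) : R :=
  harmonic n * central_binom n / ((2 * INR n - 1) ^ 2 * 2 ^ (2 * n)).

From Stdlib Require Import Reals Lra Lia Factorial Nsatz.
From Coquelicot Require Import Coquelicot.
Open Scope R_scope.

(* Write c_k = binom(2k,k)/4^k ([wallis k]). The series is F(1) for
     F(x) = sum_k c_(k+1)/(2k+1)^2 * sum_(j<=k) x^(2j+2)/(j+1),
   and since the inner sums truncate -log(1-x^2), F satisfies
     (1 - x^2) F'(x) = 2x (G(1) - G(x)),
   where G(x) = sum_k c_(k+1)/(2k+1)^2 x^(2k+2) = x arcsin x + sqrt(1-x^2) - 1.
   For x = sin t this reads cos t * F'(sin t) = Phi'(t) + (pi - 2t)/cos t with an
   elementary Phi ([elem_antideriv]) such that Phi(pi/2) - Phi(0) = pi(1 - log 2) - 4,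
   while the substitution t = pi/2 - 2 arctan u turns the integral of (pi - 2t)/cos t
   over [0, pi/2] into 4 * int_0^1 arctan(u)/u du = 4G.

   No limit is exchanged with an integral: with the truncations F_n, G_n and the
   partial sums Ti_m of Ti_2(u) = sum_k (-1)^k u^(2k+1)/(2k+1)^2, the function
     D(t) = F_n(sin t) - Phi(t) + 4 Ti_m(tan((pi/2 - t)/2))      ([defect n m])
   has D(pi/2) - D(0) equal to the error of the n-th partial sum against
   pi(1 - log 2) - 4 + 4 Ti_m(1), and |D'| <= 2 c_n + 4/(2m+3) on (0, pi/2).
   The first term comes from the arcsine tail bound
   pi/2 - sum_(k<=n) c_k/(2k+1) <= c_n, the second from the alternating remainder of
   the arctangent series; both vanish as n = m goes to infinity. *)

(** * Differentiation and the mean value theorem *)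

(* Coquelicot's generic rules specialised to [R]: their conclusions are then stated
   with the operations of [R], so that [ring] and [field] apply to the side goals. *)
Lemma is_derive_Rext (f g : R -> R) (x l : R) :
  (forall y, f y = g y) -> is_derive f x l -> is_derive g x l.
Proof. intros H. apply is_derive_ext. exact H. Qed.

Lemma is_derive_Rplus (f g : R -> R) (x df dg : R) :
  is_derive f x df -> is_derive g x dg -> is_derive (fun y => f y + g y) x (df + dg).
Proof. exact (is_derive_plus f g x df dg). Qed.

Lemma is_derive_Rminus (f g : R -> R) (x df dg : R) :
  is_derive f x df -> is_derive g x dg -> is_derive (fun y => f y - g y) x (df - dg).
Proof. exact (is_derive_minus f g x df dg). Qed.

Lemma is_derive_Rcomp (f g : R -> R) (x df dg : R) :
  is_derive f (g x) df -> is_derive g x dg -> is_derive (fun y => f (g y)) x (dg * df).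
Proof. exact (is_derive_comp f g x df dg). Qed.

Lemma is_derive_R_id (x : R) : is_derive (fun y => y) x 1.
Proof. apply is_derive_Reals, derivable_pt_lim_id. Qed.

Lemma is_derive_R_const (a x : R) : is_derive (fun _ => a) x 0.
Proof. apply is_derive_Reals, derivable_pt_lim_const. Qed.

Lemma is_derive_continuity_pt (f : R -> R) (x l : R) : is_derive f x l -> continuity_pt f x.
Proof. intros H. apply derivable_continuous_pt. exists l. apply is_derive_Reals, H. Qed.

Lemma is_derive_coef_pow_odd (a : R) (k : nat) (x : R) :
  is_derive (fun y => a * y ^ (2 * k + 1)) x (a * (2 * INR k + 1) * x ^ (2 * k)).
Proof.
  rewrite Rmult_assoc. apply is_derive_scal.
  replace (2 * INR k + 1) with (INR (S (2 * k))) by (rewrite S_INR, mult_INR; simpl; ring).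
  replace (2 * k + 1)%nat with (S (2 * k)) by lia.
  apply is_derive_Reals, derivable_pt_lim_pow.
Qed.

Lemma is_derive_coef_pow_even (a : R) (k : nat) (x : R) :
  is_derive (fun y => a * y ^ (2 * k + 2)) x (a * (2 * INR k + 2) * x ^ (2 * k + 1)).
Proof.
  rewrite Rmult_assoc. apply is_derive_scal.
  replace (2 * INR k + 2) with (INR (S (2 * k + 1)))
    by (rewrite S_INR, plus_INR, mult_INR; simpl; ring).
  replace (2 * k + 2)%nat with (S (2 * k + 1)) by lia.
  apply is_derive_Reals, derivable_pt_lim_pow.
Qed.

Lemma continuous_increment_le (f g df dg : R -> R) (a b : R) :
  a <= b ->
  (forall x, a <= x <= b -> continuity_pt f x /\ continuity_pt g x) ->
  (forall x, a < x < b -> is_derive f x (df x) /\ is_derive g x (dg x)) ->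
  (forall x, a < x < b -> df x <= dg x) ->
  f b - f a <= g b - g a.
Proof.
  intros Hab Hcont Hder Hle.
  destruct (Req_dec a b) as [<- | Hne]; [lra |].
  set (h x := g x - f x).
  assert (Hh : forall x (Hx : a < x < b), derivable_pt_lim h x (dg x - df x)).
  { intros x Hx. destruct (Hder x Hx). apply is_derive_Reals, (is_derive_minus g f); auto. }
  destruct (MVT h id a b (fun x Hx => exist _ _ (Hh x Hx)) (fun x _ => derivable_pt_id x))
    as [x [Hx Heq]]; [lra | | |].
  - intros x Hx. destruct (Hcont x Hx). apply continuity_pt_minus; assumption.
  - intros x _. apply derivable_continuous_pt, derivable_pt_id.
  - rewrite derive_pt_id in Heq. simpl in Heq. unfold h, id in Heq.
    specialize (Hle x Hx). nra.
Qed.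

Lemma continuous_increment_abs_le (f g df dg : R -> R) (a b : R) :
  a <= b ->
  (forall x, a <= x <= b -> continuity_pt f x /\ continuity_pt g x) ->
  (forall x, a < x < b -> is_derive f x (df x) /\ is_derive g x (dg x)) ->
  (forall x, a < x < b -> Rabs (df x) <= dg x) ->
  Rabs (f b - f a) <= g b - g a.
Proof.
  intros Hab Hcont Hder Hle.
  apply Rabs_le; split.
  - enough (- g b - - g a <= f b - f a) by lra.
    apply (continuous_increment_le (fun x => - g x) f (fun x => - dg x) df); auto.
    + intros x Hx. destruct (Hcont x Hx). split; [apply continuity_pt_opp |]; assumption.
    + intros x Hx. destruct (Hder x Hx). split; [apply (is_derive_opp g) |]; assumption.
    + intros x Hx. specialize (Hle x Hx). apply Rabs_le_between in Hle. lra.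
  - apply (continuous_increment_le f g df dg); auto.
    intros x Hx. specialize (Hle x Hx). apply Rabs_le_between in Hle. lra.
Qed.

Lemma is_derive_increment_le (f g df dg : R -> R) (a b : R) :
  a <= b ->
  (forall x, a <= x <= b -> is_derive f x (df x)) ->
  (forall x, a <= x <= b -> is_derive g x (dg x)) ->
  (forall x, a < x < b -> df x <= dg x) ->
  f b - f a <= g b - g a.
Proof.
  intros Hab Hf Hg. apply (continuous_increment_le f g df dg a b Hab).
  - intros x Hx. split; eapply is_derive_continuity_pt; [apply Hf | apply Hg]; exact Hx.
  - intros x Hx. split; [apply Hf | apply Hg]; lra.
Qed.

Lemma is_derive_increment_abs_le (f g df dg : R -> R) (a b : R) :
  a <= b ->
  (forall x, a <= x <= b -> is_derive f x (df x)) ->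
  (forall x, a <= x <= b -> is_derive g x (dg x)) ->
  (forall x, a < x < b -> Rabs (df x) <= dg x) ->
  Rabs (f b - f a) <= g b - g a.
Proof.
  intros Hab Hf Hg. apply (continuous_increment_abs_le f g df dg a b Hab).
  - intros x Hx. split; eapply is_derive_continuity_pt; [apply Hf | apply Hg]; exact Hx.
  - intros x Hx. split; [apply Hf | apply Hg]; lra.
Qed.

Lemma is_derive_nondecreasing (f df : R -> R) (a b : R) :
  a <= b ->
  (forall x, a <= x <= b -> is_derive f x (df x)) ->
  (forall x, a < x < b -> 0 <= df x) ->
  f a <= f b.
Proof.
  intros Hab Hf Hpos.
  enough (0 - 0 <= f b - f a) by lra.
  apply (is_derive_increment_le (fun _ => 0) f (fun _ => 0) df a b); auto.
  intros x _. apply is_derive_R_const.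
Qed.

Lemma is_derive_nonincreasing (f df : R -> R) (a b : R) :
  a <= b ->
  (forall x, a <= x <= b -> is_derive f x (df x)) ->
  (forall x, a < x < b -> df x <= 0) ->
  f b <= f a.
Proof.
  intros Hab Hf Hneg.
  enough (f b - f a <= 0 - 0) by lra.
  apply (is_derive_increment_le f (fun _ => 0) df (fun _ => 0) a b); auto.
  intros x _. apply is_derive_R_const.
Qed.

(** * Finite sums and central binomial coefficients *)

Lemma sum_Sn_R (a : nat -> R) (n : nat) : sum_n a (S n) = sum_n a n + a (S n).
Proof. exact (sum_Sn a n). Qed.

Lemma sum_n_geom (q : R) (n : nat) :
  q <> 1 -> sum_n (fun k => q ^ k) n = (1 - q ^ S n) / (1 - q) :> R.
Proof.
  intros Hq.
  induction n as [| n IH]; [rewrite sum_O | rewrite sum_Sn_R, IH]; simpl; field; lra.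
Qed.

Lemma sum_n_pow_0 (a : nat -> R) (e : nat -> nat) (n : nat) :
  (forall k, (0 < e k)%nat) -> sum_n (fun k => a k * 0 ^ e k) n = 0 :> R.
Proof.
  intros He.
  induction n as [| n IH]; [rewrite sum_O | rewrite sum_Sn_R, IH];
    (rewrite pow_i; [ring | apply He]).
Qed.

Lemma odd_INR_pos (k : nat) : 0 < 2 * INR k + 1.
Proof. generalize (pos_INR k). lra. Qed.

Definition wallis (n : nat) : R := central_binom n / 2 ^ (2 * n).

Lemma wallis_0 : wallis 0 = 1.
Proof. unfold wallis, central_binom, Binomial.C. simpl. field. Qed.

Lemma wallis_pos (n : nat) : 0 < wallis n.
Proof.
  unfold wallis, central_binom, Binomial.C.
  apply Rdiv_lt_0_compat; [apply Rdiv_lt_0_compat | apply pow_lt; lra].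
  - apply INR_fact_lt_0.
  - apply Rmult_lt_0_compat; apply INR_fact_lt_0.
Qed.

Lemma wallis_S (n : nat) : (2 * INR n + 2) * wallis (S n) = (2 * INR n + 1) * wallis n.
Proof.
  unfold wallis, central_binom, Binomial.C.
  replace (2 * S n)%nat with (S (S (2 * n))) by lia.
  replace (S (S (2 * n)) - S n)%nat with (S n) by lia.
  replace (2 * n - n)%nat with n by lia.
  rewrite !fact_simpl, !mult_INR, !S_INR, mult_INR.
  replace (2 ^ S (S (2 * n))) with (4 * 2 ^ (2 * n)) by (simpl; ring).
  assert (INR (fact n) <> 0) by apply INR_fact_neq_0.
  assert (INR (fact (2 * n)) <> 0) by apply INR_fact_neq_0.
  assert (2 ^ (2 * n) <> 0) by (apply pow_nonzero; lra).
  assert (0 <= INR n) by apply pos_INR.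
  simpl. field. repeat split; auto; lra.
Qed.

Lemma wallis_1 : wallis 1 = / 2.
Proof. generalize (wallis_S 0). rewrite wallis_0. simpl. lra. Qed.

Lemma wallis_sq_le (n : nat) : wallis n ^ 2 * (2 * INR n + 1) <= 1.
Proof.
  induction n as [| n IH].
  - rewrite wallis_0. simpl. lra.
  - assert (Hn := pos_INR n). assert (Hw := wallis_pos n).
    assert (Hrec : wallis (S n) = (2 * INR n + 1) * wallis n / (2 * INR n + 2))
      by (rewrite <- wallis_S; field; lra).
    rewrite Hrec, S_INR.
    apply Rle_trans with (wallis n ^ 2 * (2 * INR n + 1)); [| exact IH].
    apply Rmult_le_reg_r with ((2 * INR n + 2) ^ 2); [nra |].
    replace (((2 * INR n + 1) * wallis n / (2 * INR n + 2)) ^ 2 * (2 * (INR n + 1) + 1)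
             * (2 * INR n + 2) ^ 2)
      with ((2 * INR n + 1) ^ 2 * wallis n ^ 2 * (2 * INR n + 3)) by (field; lra).
    nra.
Qed.

Lemma is_lim_seq_inv_affine (a : R) : 0 < a -> is_lim_seq (fun n => / (2 * INR n + a)) 0.
Proof.
  intros Ha.
  replace (Finite 0) with (Rbar_inv p_infty) by reflexivity.
  apply is_lim_seq_inv; [| discriminate].
  apply (is_lim_seq_le_p_loc INR); [| apply is_lim_seq_INR].
  exists O. intros k _. assert (Hk := pos_INR k). lra.
Qed.

Lemma is_lim_seq_wallis : is_lim_seq wallis 0.
Proof.
  assert (Hsq : is_lim_seq (fun n => wallis n ^ 2) 0).
  { apply (is_lim_seq_le_le (fun _ => 0) _ (fun n => / (2 * INR n + 1)));
      [| apply is_lim_seq_const | apply is_lim_seq_inv_affine; lra].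
    intros n. assert (Hw := wallis_pos n). assert (Hn := pos_INR n).
    split; [apply pow_le; lra |].
    apply (Rmult_le_reg_r (2 * INR n + 1)); [lra |].
    rewrite Rinv_l by lra. apply wallis_sq_le. }
  apply (is_lim_seq_ext (fun n => sqrt (wallis n ^ 2))).
  - intros n. apply sqrt_pow2. left. apply wallis_pos.
  - rewrite <- sqrt_0.
    apply (is_lim_seq_continuous sqrt); [| exact Hsq].
    apply continuity_pt_sqrt. lra.
Qed.

(** * Truncated power series *)

(* Truncations after the index-n term of the Maclaurin series of (1-x^2)^(-1/2),
   arcsin x, G(x) = x arcsin x + sqrt(1-x^2) - 1, -log(1-x^2), F, arctan x and Ti_2(x). *)
Definition invsqrt_poly (n : nat) (x : R) : R :=
  sum_n (fun k => wallis k * x ^ (2 * k)) n.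

Definition asin_poly (n : nat) (x : R) : R :=
  sum_n (fun k => wallis k / (2 * INR k + 1) * x ^ (2 * k + 1)) n.

Definition asin_prim_coef (k : nat) : R := wallis (S k) / (2 * INR k + 1) ^ 2.

Definition asin_prim_poly (n : nat) (x : R) : R :=
  sum_n (fun k => asin_prim_coef k * x ^ (2 * k + 2)) n.

Definition log_poly (n : nat) (x : R) : R :=
  sum_n (fun k => / INR (S k) * x ^ (2 * k + 2)) n.

Definition main_poly (n : nat) (x : R) : R :=
  sum_n (fun k => asin_prim_coef k * log_poly k x) n.

Definition atan_poly (n : nat) (x : R) : R :=
  sum_n (fun k => (-1) ^ k / (2 * INR k + 1) * x ^ (2 * k + 1)) n.

Definition ti2_poly (n : nat) (x : R) : R :=
  sum_n (fun k => (-1) ^ k / (2 * INR k + 1) ^ 2 * x ^ (2 * k + 1)) n.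

Lemma asin_poly_derive (n : nat) (x : R) : is_derive (asin_poly n) x (invsqrt_poly n x).
Proof.
  apply (is_derive_sum_n (fun k y => wallis k / (2 * INR k + 1) * y ^ (2 * k + 1))).
  intros k _.
  replace (wallis k * x ^ (2 * k))
    with (wallis k / (2 * INR k + 1) * (2 * INR k + 1) * x ^ (2 * k))
    by (generalize (odd_INR_pos k); intros; field; lra).
  apply is_derive_coef_pow_odd.
Qed.

Lemma asin_prim_poly_derive (n : nat) (x : R) :
  is_derive (asin_prim_poly n) x (asin_poly n x).
Proof.
  apply (is_derive_sum_n (fun k y => asin_prim_coef k * y ^ (2 * k + 2))).
  intros k _.
  replace (wallis k / (2 * INR k + 1) * x ^ (2 * k + 1))
    with (asin_prim_coef k * (2 * INR k + 2) * x ^ (2 * k + 1)).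
  - apply is_derive_coef_pow_even.
  - assert (Hk := odd_INR_pos k). unfold asin_prim_coef.
    replace (wallis k) with ((2 * INR k + 2) * wallis (S k) / (2 * INR k + 1))
      by (rewrite wallis_S; field; lra).
    field. lra.
Qed.

Lemma cos_sq (x : R) : cos x ^ 2 = 1 - sin x ^ 2.
Proof. rewrite <- !Rsqr_pow2. apply cos2. Qed.

Lemma cos_invsqrt_poly_sin_derive (n : nat) (w : R) :
  is_derive (fun y => cos y * invsqrt_poly n (sin y)) w
    (- ((2 * INR n + 2) * wallis (S n) * sin w ^ (2 * n + 1))).
Proof.
  induction n as [| n IH].
  - apply (is_derive_Rext cos).
    { intros y. unfold invsqrt_poly. rewrite sum_O, wallis_0. simpl. ring. }
    evar_last; [apply is_derive_cos |]. rewrite wallis_1. simpl. field.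
  - apply (is_derive_Rext (fun y => cos y * invsqrt_poly n (sin y)
                                    + cos y * (wallis (S n) * sin y ^ (2 * n + 2)))).
    { intros y. unfold invsqrt_poly. rewrite sum_Sn_R.
      replace (2 * S n)%nat with (2 * n + 2)%nat by lia. ring. }
    evar_last.
    + apply is_derive_Rplus; [exact IH |].
      apply Derive.is_derive_mult; [apply is_derive_cos |].
      apply (is_derive_Rcomp (fun y => wallis (S n) * y ^ (2 * n + 2)) sin);
        [apply is_derive_coef_pow_even | apply is_derive_sin].
    + assert (Hrec := wallis_S (S n)). rewrite S_INR in Hrec |- *.
      replace (2 * (INR n + 1) + 2) with (2 * INR n + 4) in Hrec |- * by ring.
      replace (2 * S n + 1)%nat with (2 * n + 1 + 2)%nat by lia.
      replace (2 * n + 2)%nat with (2 * n + 1 + 1)%nat by lia.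
      rewrite Hrec, !pow_add, <- (Rmult_assoc (cos w) (cos w)).
      replace (cos w * cos w) with (1 - sin w ^ 2) by (rewrite <- cos_sq; ring).
      ring.
Qed.

Lemma log_poly_derive (n : nat) (x : R) :
  x ^ 2 <> 1 ->
  is_derive (log_poly n) x (2 * x * (1 - x ^ (2 * n + 2)) / (1 - x ^ 2)).
Proof.
  intros Hx.
  replace (2 * x * (1 - x ^ (2 * n + 2)) / (1 - x ^ 2))
    with (sum_n (fun k => 2 * x * (x ^ 2) ^ k) n : R).
  - apply (is_derive_sum_n (fun k y => / INR (S k) * y ^ (2 * k + 2))). intros k _.
    replace (2 * x * (x ^ 2) ^ k) with (/ INR (S k) * (2 * INR k + 2) * x ^ (2 * k + 1)).
    + apply is_derive_coef_pow_even.
    + rewrite <- pow_mult, pow_add, S_INR. generalize (pos_INR k). intros. field. lra.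
  - rewrite (sum_n_mult_l (2 * x) (fun k => (x ^ 2) ^ k)), sum_n_geom by exact Hx.
    change (mult (2 * x) ?y) with (2 * x * y).
    rewrite <- pow_mult. replace (2 * S n)%nat with (2 * n + 2)%nat by lia. field. lra.
Qed.

Lemma main_poly_derive (n : nat) (x : R) :
  x ^ 2 <> 1 ->
  is_derive (main_poly n) x
    (2 * x * (asin_prim_poly n 1 - asin_prim_poly n x) / (1 - x ^ 2)).
Proof.
  intros Hx.
  replace (2 * x * (asin_prim_poly n 1 - asin_prim_poly n x) / (1 - x ^ 2)) with
    (sum_n (fun k => asin_prim_coef k * (2 * x * (1 - x ^ (2 * k + 2)) / (1 - x ^ 2))) n : R).
  - apply (is_derive_sum_n (fun k y => asin_prim_coef k * log_poly k y)). intros k _.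
    apply is_derive_scal, log_poly_derive, Hx.
  - unfold asin_prim_poly.
    induction n as [| n IH]; [rewrite !sum_O | rewrite !sum_Sn_R, IH];
      rewrite pow1; field; lra.
Qed.

Lemma atan_poly_derive (n : nat) (x : R) :
  is_derive (atan_poly n) x ((1 - (- x ^ 2) ^ S n) / (1 + x ^ 2)).
Proof.
  replace ((1 - (- x ^ 2) ^ S n) / (1 + x ^ 2)) with (sum_n (fun k => (- x ^ 2) ^ k) n : R).
  - apply (is_derive_sum_n (fun k y => (-1) ^ k / (2 * INR k + 1) * y ^ (2 * k + 1))).
    intros k _.
    replace ((- x ^ 2) ^ k) with ((-1) ^ k / (2 * INR k + 1) * (2 * INR k + 1) * x ^ (2 * k)).
    + apply is_derive_coef_pow_odd.
    + replace (- x ^ 2) with (-1 * x ^ 2) by ring.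
      rewrite Rpow_mult_distr, <- pow_mult. generalize (odd_INR_pos k). intros. field. lra.
  - rewrite sum_n_geom by (generalize (pow2_ge_0 x); lra).
    replace (1 - - x ^ 2) with (1 + x ^ 2) by ring. reflexivity.
Qed.

Lemma ti2_poly_derive (n : nat) (x : R) :
  x <> 0 -> is_derive (ti2_poly n) x (atan_poly n x / x).
Proof.
  intros Hx.
  replace (atan_poly n x / x) with
    (sum_n (fun k => (-1) ^ k / (2 * INR k + 1) ^ 2 * (2 * INR k + 1) * x ^ (2 * k)) n : R).
  - apply (is_derive_sum_n (fun k y => (-1) ^ k / (2 * INR k + 1) ^ 2 * y ^ (2 * k + 1))).
    intros k _. apply is_derive_coef_pow_odd.
  - unfold atan_poly.
    induction n as [| n IH]; [rewrite !sum_O | rewrite !sum_Sn_R, IH];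
      rewrite pow_add; field; split; try apply Rgt_not_eq, odd_INR_pos; exact Hx.
Qed.

Lemma ex_derive_main_poly (n : nat) (x : R) : ex_derive (main_poly n) x.
Proof.
  apply (ex_derive_sum_n (fun k y => asin_prim_coef k * log_poly k y)). intros k _.
  apply ex_derive_scal.
  apply (ex_derive_sum_n (fun j y => / INR (S j) * y ^ (2 * j + 2))). intros j _.
  auto_derive. exact I.
Qed.

Lemma ex_derive_ti2_poly (n : nat) (x : R) : ex_derive (ti2_poly n) x.
Proof.
  apply (ex_derive_sum_n (fun k y => (-1) ^ k / (2 * INR k + 1) ^ 2 * y ^ (2 * k + 1))).
  intros k _. auto_derive. exact I.
Qed.

Lemma invsqrt_poly_0 (n : nat) : invsqrt_poly n 0 = 1.
Proof.
  unfold invsqrt_poly.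
  induction n as [| n IH]; [rewrite sum_O, wallis_0; simpl; ring |].
  rewrite sum_Sn_R, IH, pow_i by lia. ring.
Qed.

Lemma asin_poly_0 (n : nat) : asin_poly n 0 = 0.
Proof. apply sum_n_pow_0. intros k. lia. Qed.

Lemma atan_poly_0 (n : nat) : atan_poly n 0 = 0.
Proof. apply sum_n_pow_0. intros k. lia. Qed.

Lemma ti2_poly_0 (n : nat) : ti2_poly n 0 = 0.
Proof. apply sum_n_pow_0. intros k. lia. Qed.

Lemma main_poly_0 (n : nat) : main_poly n 0 = 0.
Proof.
  unfold main_poly.
  induction n as [| n IH]; [rewrite sum_O | rewrite sum_Sn_R, IH];
    unfold log_poly; rewrite sum_n_pow_0 by (intros; lia); ring.
Qed.

Lemma log_poly_1 (n : nat) : log_poly n 1 = harmonic (S n).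
Proof.
  unfold log_poly, harmonic.
  induction n as [| n IH].
  - rewrite sum_O, sum_n_n, pow1. simpl. ring.
  - rewrite sum_Sn_R, IH, (sum_n_Sm _ 1 (S n)) by lia. rewrite pow1, Rmult_1_r. reflexivity.
Qed.

Lemma main_poly_1 (n : nat) : main_poly n 1 = sum_n (fun k => main_term (S k)) n.
Proof.
  apply sum_n_ext. intros k. change (?a = ?b) with (@eq R a b).
  unfold asin_prim_coef, main_term, wallis. rewrite log_poly_1, S_INR.
  assert (Hk := odd_INR_pos k). assert (2 ^ (2 * S k) <> 0) by (apply pow_nonzero; lra).
  field. split; lra.
Qed.

Lemma ti2_poly_1 (n : nat) : ti2_poly n 1 = sum_n catalan_term n.
Proof.
  apply sum_n_ext. intros k. change (?a = ?b) with (@eq R a b).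
  unfold catalan_term. rewrite pow1, plus_INR, mult_INR. simpl. field.
  generalize (odd_INR_pos k). simpl. lra.
Qed.

(** * The arcsine side *)

Lemma PI2_sub_mul_sin_le_cos (w : R) : 0 <= w <= PI / 2 -> (PI / 2 - w) * sin w <= cos w.
Proof.
  intros Hw.
  enough (cos (PI / 2) - (PI / 2 - PI / 2) * sin (PI / 2) <= cos w - (PI / 2 - w) * sin w)
    by (rewrite cos_PI2 in *; lra).
  apply (is_derive_nonincreasing (fun x => cos x - (PI / 2 - x) * sin x)
           (fun x => - ((PI / 2 - x) * cos x))); [lra | |].
  - intros x _. evar_last.
    + apply is_derive_Rminus; [apply is_derive_cos |].
      apply Derive.is_derive_mult; [| apply is_derive_sin].
      apply is_derive_Rminus; [apply is_derive_R_const | apply is_derive_R_id].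
    + ring.
  - intros x Hx. assert (0 <= cos x) by (apply cos_ge_0; lra). nra.
Qed.

Lemma cos_invsqrt_poly_sin_le_1 (n : nat) (w : R) :
  0 <= w <= PI / 2 -> cos w * invsqrt_poly n (sin w) <= 1.
Proof.
  intros Hw.
  replace 1 with (cos 0 * invsqrt_poly n (sin 0))
    by (rewrite cos_0, sin_0, invsqrt_poly_0; ring).
  apply (is_derive_nonincreasing (fun y => cos y * invsqrt_poly n (sin y))
           (fun y => - ((2 * INR n + 2) * wallis (S n) * sin y ^ (2 * n + 1))) 0 w);
    [lra | intros x _; apply cos_invsqrt_poly_sin_derive |].
  intros x Hx.
  assert (0 <= sin x ^ (2 * n + 1)) by (apply pow_le, sin_ge_0; lra).
  assert (0 <= (2 * INR n + 2) * wallis (S n))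
    by (generalize (pos_INR n) (wallis_pos (S n)); intros; nra).
  nra.
Qed.

Definition asin_err (n : nat) (w : R) : R := w - asin_poly n (sin w).

Lemma asin_err_derive (n : nat) (w : R) :
  is_derive (asin_err n) w (1 - cos w * invsqrt_poly n (sin w)).
Proof.
  apply is_derive_Rminus; [apply is_derive_R_id |].
  apply (is_derive_Rcomp (asin_poly n) sin); [apply asin_poly_derive | apply is_derive_sin].
Qed.

Lemma asin_err_nondecreasing (n : nat) (a b : R) :
  0 <= a <= b -> b <= PI / 2 -> asin_err n a <= asin_err n b.
Proof.
  intros Ha Hb.
  apply (is_derive_nondecreasing _ (fun x => 1 - cos x * invsqrt_poly n (sin x)) a b);
    [lra | intros x _; apply asin_err_derive |].
  intros x Hx. generalize (cos_invsqrt_poly_sin_le_1 n x). lra.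
Qed.

Lemma asin_err_nonneg (n : nat) (w : R) : 0 <= w <= PI / 2 -> 0 <= asin_err n w.
Proof.
  intros Hw.
  replace 0 with (asin_err n 0) by (unfold asin_err; rewrite sin_0, asin_poly_0; ring).
  apply asin_err_nondecreasing; lra.
Qed.

(* The function e(w) + (pi/2 - w)(1 - q(w)), with e = asin_err n and
   q(w) = cos w * invsqrt_poly n (sin w), vanishes at 0 and has derivative
   (pi/2 - w)(2n+1) c_n sin^(2n+1) w, which by [PI2_sub_mul_sin_le_cos] is at most
   the derivative of c_n sin^(2n+1) w. *)
Lemma asin_err_PI2_le (n : nat) : asin_err n (PI / 2) <= wallis n.
Proof.
  assert (HPI := PI_RGT_0).
  set (q w := cos w * invsqrt_poly n (sin w)).
  assert (Hq0 : q 0 = 1) by (unfold q; rewrite cos_0, sin_0, invsqrt_poly_0; ring).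
  assert (He0 : asin_err n 0 = 0) by (unfold asin_err; rewrite sin_0, asin_poly_0; ring).
  enough (asin_err n (PI / 2) + (PI / 2 - PI / 2) * (1 - q (PI / 2))
            - (asin_err n 0 + (PI / 2 - 0) * (1 - q 0))
          <= wallis n * sin (PI / 2) ^ (2 * n + 1) - wallis n * sin 0 ^ (2 * n + 1))
    by (rewrite Hq0, He0, sin_PI2, sin_0, pow1, pow_i in * by lia; lra).
  apply (is_derive_increment_le
           (fun w => asin_err n w + (PI / 2 - w) * (1 - q w))
           (fun w => wallis n * sin w ^ (2 * n + 1))
           (fun w => (PI / 2 - w) * ((2 * INR n + 2) * wallis (S n) * sin w ^ (2 * n + 1)))
           (fun w => cos w * (wallis n * (2 * INR n + 1) * sin w ^ (2 * n)))); [lra | | |].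
  - intros x _. evar_last.
    + apply is_derive_Rplus; [apply asin_err_derive |].
      apply Derive.is_derive_mult.
      * apply is_derive_Rminus; [apply is_derive_R_const | apply is_derive_R_id].
      * apply is_derive_Rminus; [apply is_derive_R_const | apply cos_invsqrt_poly_sin_derive].
    + unfold q. ring.
  - intros x _.
    apply (is_derive_Rcomp (fun y => wallis n * y ^ (2 * n + 1)) sin);
      [apply is_derive_coef_pow_odd | apply is_derive_sin].
  - intros x Hx.
    rewrite wallis_S, pow_add, pow_1.
    assert (Hl := PI2_sub_mul_sin_le_cos x ltac:(lra)).
    assert (0 <= sin x ^ (2 * n)) by (apply pow_le, sin_ge_0; lra).
    assert (0 <= (2 * INR n + 1) * wallis n * sin x ^ (2 * n))
      by (generalize (odd_INR_pos n) (wallis_pos n); intros; apply Rmult_le_pos; nra).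
    nra.
Qed.

Definition asin_prim_err (n : nat) (t : R) : R :=
  cos t + t * sin t - 1 - asin_prim_poly n (sin t).

Lemma asin_prim_err_derive (n : nat) (t : R) :
  is_derive (asin_prim_err n) t (cos t * asin_err n t).
Proof.
  evar_last.
  - apply is_derive_Rminus; [apply is_derive_Rminus; [apply is_derive_Rplus |] |].
    + apply is_derive_cos.
    + apply Derive.is_derive_mult; [apply is_derive_R_id | apply is_derive_sin].
    + apply is_derive_R_const.
    + apply (is_derive_Rcomp (asin_prim_poly n) sin);
        [apply asin_prim_poly_derive | apply is_derive_sin].
  - unfold asin_err. ring.
Qed.

Lemma asin_prim_err_increment (n : nat) (t : R) :
  0 <= t <= PI / 2 ->
  0 <= asin_prim_err n (PI / 2) - asin_prim_err n t <= wallis n * (1 - sin t).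
Proof.
  intros Ht.
  assert (He : forall x, t < x < PI / 2 -> 0 <= asin_err n x <= wallis n /\ 0 <= cos x).
  { intros x Hx. repeat split.
    - apply asin_err_nonneg. lra.
    - apply (Rle_trans _ (asin_err n (PI / 2))); [apply asin_err_nondecreasing; lra |].
      apply asin_err_PI2_le.
    - apply cos_ge_0; lra. }
  split.
  - enough (asin_prim_err n t <= asin_prim_err n (PI / 2)) by lra.
    apply (is_derive_nondecreasing _ (fun x => cos x * asin_err n x)); [lra | |].
    + intros x _. apply asin_prim_err_derive.
    + intros x Hx. specialize (He x Hx). nra.
  - replace (wallis n * (1 - sin t)) with (wallis n * sin (PI / 2) - wallis n * sin t)
      by (rewrite sin_PI2; ring).
    apply (is_derive_increment_le _ (fun x => wallis n * sin x)
             (fun x => cos x * asin_err n x) (fun x => wallis n * cos x)); [lra | | |].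
    + intros x _. apply asin_prim_err_derive.
    + intros x _. apply is_derive_scal, is_derive_sin.
    + intros x Hx. specialize (He x Hx). nra.
Qed.

(** * The arctangent side *)

Lemma atan_poly_tan_err (n : nat) (h : R) :
  0 <= h < PI / 2 ->
  Rabs (h - atan_poly n (tan h)) <= tan h ^ (2 * n + 3) / (2 * INR n + 3).
Proof.
  intros Hh.
  assert (Hcos : forall y, 0 <= y <= h -> cos y <> 0)
    by (intros y Hy; apply Rgt_not_eq, cos_gt_0; generalize PI_RGT_0; lra).
  assert (Hn : 2 * INR (S n) + 1 = 2 * INR n + 3) by (rewrite S_INR; ring).
  replace (h - atan_poly n (tan h))
    with ((h - atan_poly n (tan h)) - (0 - atan_poly n (tan 0)))
    by (rewrite tan_0, atan_poly_0; ring).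
  replace (tan h ^ (2 * n + 3) / (2 * INR n + 3)) with
    (/ (2 * INR n + 3) * tan h ^ (2 * S n + 1) - / (2 * INR n + 3) * tan 0 ^ (2 * S n + 1))
    by (rewrite tan_0, pow_i by lia; replace (2 * S n + 1)%nat with (2 * n + 3)%nat by lia;
        field; generalize (pos_INR n); lra).
  apply (is_derive_increment_abs_le (fun y => y - atan_poly n (tan y))
           (fun y => / (2 * INR n + 3) * tan y ^ (2 * S n + 1))
           (fun y => (- tan y ^ 2) ^ S n)
           (fun y => (tan y ^ 2 + 1) * tan y ^ (2 * S n))); [lra | | |].
  - intros y Hy. evar_last.
    + apply is_derive_Rminus; [apply is_derive_R_id |].
      apply (is_derive_Rcomp (atan_poly n) tan);
        [apply atan_poly_derive | apply is_derive_tan, Hcos, Hy].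
    + replace (1 + tan y ^ 2) with (tan y ^ 2 + 1) by ring. field.
      generalize (pow2_ge_0 (tan y)). lra.
  - intros y Hy. evar_last.
    + apply (is_derive_Rcomp (fun x => / (2 * INR n + 3) * x ^ (2 * S n + 1)) tan);
        [apply is_derive_coef_pow_odd | apply is_derive_tan, Hcos, Hy].
    + rewrite Hn. field. generalize (pos_INR n). lra.
  - intros y Hy.
    replace (- tan y ^ 2) with (-1 * tan y ^ 2) by ring.
    rewrite Rpow_mult_distr, Rabs_mult, pow_1_abs, Rmult_1_l, <- pow_mult.
    assert (0 <= tan y ^ (2 * S n)) by (rewrite pow_mult; apply pow_le, pow2_ge_0).
    rewrite Rabs_right by lra.
    generalize (pow2_ge_0 (tan y)). nra.
Qed.

Lemma tan_half_compl (t : R) :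
  cos ((PI / 2 - t) / 2) <> 0 -> tan ((PI / 2 - t) / 2) = cos t / (1 + sin t).
Proof.
  set (h := (PI / 2 - t) / 2). intros Hc.
  replace t with (PI / 2 - 2 * h) by (unfold h; field).
  rewrite cos_shift, sin_shift, sin_2a, cos_2a_cos. unfold tan.
  field. split; [nra | exact Hc].
Qed.

(** * The defect function *)

Definition elem_antideriv (t : R) : R :=
  PI * (sin t - ln (1 + sin t)) + 4 * cos t - (PI - 2 * t) * sin t.

Lemma elem_antideriv_derive (t : R) :
  -1 < sin t ->
  is_derive elem_antideriv t
    (PI * sin t * cos t / (1 + sin t) - 2 * sin t - (PI - 2 * t) * cos t).
Proof. intros Hs. unfold elem_antideriv. auto_derive; [lra | field; lra]. Qed.

Definition defect (n m : nat) (t : R) : R :=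
  main_poly n (sin t) - elem_antideriv t + 4 * ti2_poly m (tan ((PI / 2 - t) / 2)).

Definition defect_deriv (n m : nat) (t : R) : R :=
  (- 2 * sin t * (asin_prim_err n (PI / 2) - asin_prim_err n t)
   + 4 * ((PI / 2 - t) / 2 - atan_poly m (tan ((PI / 2 - t) / 2)))) / cos t.

Lemma defect_derive (n m : nat) (t : R) :
  0 < t < PI / 2 -> is_derive (defect n m) t (defect_deriv n m t).
Proof.
  intros Ht.
  assert (Hs : 0 < sin t < 1).
  { split; [apply sin_gt_0; lra |].
    rewrite <- sin_PI2. apply sin_increasing_1; lra. }
  assert (Hc : 0 < cos t) by (apply cos_gt_0; lra).
  assert (Hch : cos ((PI / 2 - t) / 2) <> 0) by (apply Rgt_not_eq, cos_gt_0; lra).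
  assert (HT := tan_half_compl t Hch).
  assert (Hpy := cos_sq t).
  evar_last.
  - apply is_derive_Rplus; [apply is_derive_Rminus |].
    + apply (is_derive_Rcomp (main_poly n) sin);
        [apply main_poly_derive; nra | apply is_derive_sin].
    + apply elem_antideriv_derive. lra.
    + apply is_derive_scal.
      apply (is_derive_Rcomp (ti2_poly m) (fun y => tan ((PI / 2 - y) / 2))).
      * apply ti2_poly_derive. rewrite HT. apply Rgt_not_eq, Rdiv_lt_0_compat; lra.
      * apply (is_derive_Rcomp tan (fun y => (PI / 2 - y) / 2) t
                 (tan ((PI / 2 - t) / 2) ^ 2 + 1) (- / 2));
          [apply is_derive_tan, Hch | auto_derive; [exact I | field]].
  (* Once tan((pi/2 - t)/2) is replaced by cos t / (1 + sin t), the identity is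
     polynomial modulo cos^2 t = 1 - sin^2 t. *)
  - unfold defect_deriv, asin_prim_err. rewrite sin_PI2, cos_PI2, HT.
    field_simplify_eq; [| repeat split; nra].
    cbv [pow] in *. nsatz.
Qed.

Lemma asin_prim_err_slope_bound (n : nat) (t : R) :
  0 < t < PI / 2 ->
  Rabs (- 2 * sin t * (asin_prim_err n (PI / 2) - asin_prim_err n t) / cos t)
  <= 2 * wallis n.
Proof.
  intros Ht.
  assert (Hs : 0 < sin t) by (apply sin_gt_0; lra).
  assert (Hc : 0 < cos t) by (apply cos_gt_0; lra).
  assert (Hpy := cos_sq t).
  assert (Hw := wallis_pos n).
  destruct (asin_prim_err_increment n t) as [Hlo Hhi]; [lra |].
  set (D := asin_prim_err n (PI / 2) - asin_prim_err n t) in *.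
  assert (Hsc : sin t * (1 - sin t) <= cos t) by nra.
  assert (HsD : sin t * D <= wallis n * cos t) by nra.
  rewrite Rabs_left1.
  - apply (Rmult_le_reg_r (cos t)); [lra |].
    replace (- (-2 * sin t * D / cos t) * cos t) with (2 * (sin t * D)) by (field; lra).
    lra.
  - unfold Rdiv. apply Rmult_le_0_r; [nra | left; apply Rinv_0_lt_compat; lra].
Qed.

Lemma atan_poly_slope_bound (m : nat) (t : R) :
  0 < t < PI / 2 ->
  Rabs (4 * ((PI / 2 - t) / 2 - atan_poly m (tan ((PI / 2 - t) / 2))) / cos t)
  <= 4 / (2 * INR m + 3).
Proof.
  intros Ht.
  assert (Hs : 0 < sin t) by (apply sin_gt_0; lra).
  assert (Hc : 0 < cos t) by (apply cos_gt_0; lra).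
  assert (Hm := odd_INR_pos m).
  assert (Herr := atan_poly_tan_err m ((PI / 2 - t) / 2) ltac:(lra)).
  rewrite tan_half_compl in Herr |- * by (apply Rgt_not_eq, cos_gt_0; lra).
  set (T := cos t / (1 + sin t)) in *.
  assert (HT0 : 0 <= T) by (unfold T; apply Rdiv_le_0_compat; lra).
  assert (HT1 : T <= 1).
  { unfold T. apply (Rmult_le_reg_r (1 + sin t)); [lra |].
    generalize (COS_bound t). intros. field_simplify; lra. }
  assert (HTp : T ^ (2 * m + 2) <= 1) by (rewrite <- (pow1 (2 * m + 2)); apply pow_incr; lra).
  assert (Hq : T ^ (2 * m + 3) / cos t = T ^ (2 * m + 2) / (1 + sin t)).
  { replace (2 * m + 3)%nat with (2 * m + 2 + 1)%nat by lia.
    rewrite pow_add, pow_1. unfold T. field. lra. }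
  unfold Rdiv at 1. rewrite !Rabs_mult, (Rabs_right 4), (Rabs_right (/ cos t))
    by (apply Rle_ge; try left; try apply Rinv_0_lt_compat; lra).
  apply (Rle_trans _ (4 * (T ^ (2 * m + 3) / (2 * INR m + 3)) / cos t)).
  { apply Rmult_le_compat_r; [left; apply Rinv_0_lt_compat; lra | lra]. }
  replace (4 * (T ^ (2 * m + 3) / (2 * INR m + 3)) / cos t)
    with (4 / (2 * INR m + 3) * (T ^ (2 * m + 2) / (1 + sin t)))
    by (rewrite <- Hq; field; lra).
  rewrite <- (Rmult_1_r (4 / (2 * INR m + 3))) at 2.
  apply Rmult_le_compat_l; [apply Rdiv_le_0_compat; lra |].
  apply (Rmult_le_reg_r (1 + sin t)); [lra |].
  field_simplify; lra.
Qed.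

Lemma defect_derive_bound (n m : nat) (t : R) :
  0 < t < PI / 2 -> Rabs (defect_deriv n m t) <= 2 * wallis n + 4 / (2 * INR m + 3).
Proof.
  intros Ht. unfold defect_deriv. rewrite Rdiv_plus_distr.
  eapply Rle_trans; [apply Rabs_triang | apply Rplus_le_compat].
  - apply asin_prim_err_slope_bound, Ht.
  - apply atan_poly_slope_bound, Ht.
Qed.

Lemma defect_continuity_pt (n m : nat) (t : R) :
  0 <= t <= PI / 2 -> continuity_pt (defect n m) t.
Proof.
  intros Ht. apply derivable_continuous_pt, ex_derive_Reals_0.
  assert (HPI := PI_RGT_0).
  assert (0 <= sin t) by (apply sin_ge_0; lra).
  assert (cos ((PI / 2 - t) / 2) <> 0) by (apply Rgt_not_eq, cos_gt_0; lra).
  unfold defect, elem_antideriv. auto_derive.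
  repeat split; [apply ex_derive_main_poly | lra | apply ex_derive_ti2_poly |].
  eexists. apply is_derive_tan. assumption.
Qed.

Lemma defect_PI2 (n m : nat) :
  defect n m (PI / 2) = sum_n (fun k => main_term (S k)) n - PI * (1 - ln 2).
Proof.
  unfold defect, elem_antideriv.
  rewrite sin_PI2, cos_PI2, main_poly_1.
  replace ((PI / 2 - PI / 2) / 2) with 0 by field.
  rewrite tan_0, ti2_poly_0. replace (1 + 1) with 2 by ring. field.
Qed.

Lemma defect_0 (n m : nat) : defect n m 0 = - 4 + 4 * sum_n catalan_term m.
Proof.
  unfold defect, elem_antideriv.
  rewrite sin_0, cos_0, main_poly_0.
  replace ((PI / 2 - 0) / 2) with (PI / 4) by field.
  rewrite tan_PI4, ti2_poly_1, Rplus_0_r, ln_1. ring.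
Qed.

Lemma main_error_bound (n m : nat) :
  Rabs (sum_n (fun k => main_term (S k)) n
        - (PI * (1 - ln 2) - 4 + 4 * sum_n catalan_term m))
  <= (2 * wallis n + 4 / (2 * INR m + 3)) * (PI / 2).
Proof.
  set (B := 2 * wallis n + 4 / (2 * INR m + 3)).
  assert (HPI := PI_RGT_0).
  replace (sum_n (fun k => main_term (S k)) n
           - (PI * (1 - ln 2) - 4 + 4 * sum_n catalan_term m))
    with (defect n m (PI / 2) - defect n m 0) by (rewrite defect_PI2, defect_0; ring).
  replace (B * (PI / 2)) with (B * (PI / 2) - B * 0) by ring.
  assert (Hlin : forall x, is_derive (fun y => B * y) x B)
    by (intros x; evar_last; [apply is_derive_scal, is_derive_R_id | ring]).
  apply (continuous_increment_abs_le (defect n m) (fun x => B * x)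
           (defect_deriv n m) (fun _ => B)); [lra | | |].
  - intros x Hx.
    split; [apply defect_continuity_pt, Hx | apply (is_derive_continuity_pt _ _ B), Hlin].
  - intros x Hx. split; [apply defect_derive, Hx | apply Hlin].
  - intros x Hx. apply defect_derive_bound, Hx.
Qed.

(** * Passing to the limit *)

Lemma ex_series_catalan : ex_series catalan_term.
Proof.
  set (u n := / INR (2 * n + 1) ^ 2).
  assert (Hpos : forall n, 0 < INR (2 * n + 1)) by (intros n; apply lt_0_INR; lia).
  destruct (alternated_series u) as [l Hl].
  - intros n. unfold u. apply Rinv_le_contravar; [apply pow_lt, Hpos |].
    apply pow_incr. split; [left; apply Hpos | apply le_INR; lia].
  - apply is_lim_seq_Reals.
    apply (is_lim_seq_ext (fun n => / (2 * INR n + 1) * / (2 * INR n + 1))).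
    { intros n. unfold u. rewrite plus_INR, mult_INR. simpl. field.
      generalize (odd_INR_pos n). lra. }
    replace (Finite 0) with (Finite (0 * 0)) by (f_equal; ring).
    apply is_lim_seq_mult'; apply is_lim_seq_inv_affine; lra.
  - exists l. apply is_series_Reals. exact Hl.
Qed.

Lemma is_lim_seq_main_error :
  is_lim_seq (fun n => sum_n (fun k => main_term (S k)) n
                       - (PI * (1 - ln 2) - 4 + 4 * sum_n catalan_term n)) 0.
Proof.
  apply is_lim_seq_abs_0.
  apply (is_lim_seq_le_le (fun _ => 0) _
           (fun n => (2 * wallis n + 4 * / (2 * INR n + 3)) * (PI / 2)));
    [| apply is_lim_seq_const |].
  - intros n. split; [apply Rabs_pos | apply main_error_bound].
  - replace (Finite 0) with (Finite ((2 * 0 + 4 * 0) * (PI / 2))) by (f_equal; ring).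
    apply is_lim_seq_mult'; [apply is_lim_seq_plus' | apply is_lim_seq_const];
      apply is_lim_seq_mult'; try apply is_lim_seq_const.
    + apply is_lim_seq_wallis.
    + apply is_lim_seq_inv_affine. lra.
Qed.

Theorem mainTheorem8 :
  is_series (fun k : nat => main_term (S k)) (PI * (1 - ln 2) - 4 * (1 - Catalan)).
Proof.
  change (is_lim_seq (sum_n (fun k => main_term (S k)))
                     (PI * (1 - ln 2) - 4 * (1 - Catalan))).
  set (C := PI * (1 - ln 2) - 4).
  apply (is_lim_seq_ext
           (fun n => (sum_n (fun k => main_term (S k)) n - (C + 4 * sum_n catalan_term n))
                     + (C + 4 * sum_n catalan_term n))); [intros n; ring |].
  replace (Finite (PI * (1 - ln 2) - 4 * (1 - Catalan)))
    with (Finite (0 + (C + 4 * Catalan))) by (f_equal; unfold C; ring).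
  apply is_lim_seq_plus'; [apply is_lim_seq_main_error |].
  apply is_lim_seq_plus'; [apply is_lim_seq_const |].
  apply is_lim_seq_mult'; [apply is_lim_seq_const | apply (Series_correct _ ex_series_catalan)].
Qed.
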